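(* In the setting of the context, let $\underline b^{j}$ denote the lowest bid in the $n_j$-bidder auction and, for $\gamma\in[0,1]$, let $b^j_\gamma$ be the $\gamma$-quantile of $G(\cdot\mid n_j)$, $j=1,2$. Then $$\theta=\frac{n_2(n_1-1)g(\underline b^{2}\mid n_2)-n_1(n_2-1)g(\underline b^{1}\mid n_1)}{(n_1-1)g(\underline b^{2}\mid n_2)-(n_2-1)g(\underline b^{1}\mid n_1)},$$ the function $H(\gamma):=D(\gamma)/D'(\gamma)$ satisfies $$H(\gamma)=\frac{b^2_\gamma-b^1_\gamma}{1-\theta}\left[\frac{1}{(n_1-1)g(b^1_\gamma\mid n_1)}-\frac{1}{(n_2-1)g(b^2_\gamma\mid n_2)}\right]^{-1},$$ $D(\gamma)=\exp\!\left[-\int_\gamma^1 \frac{dt}{H(t)}\right]$, and the $\gamma$-quantile $v_\gamma$ of $F_0$ satisfies, for $j=1,2$, $$v_\gamma=b^j_\gamma+\frac{(1-\theta)H(\gamma)}{(n_j-1)g(b^j_\gamma\mid n_j)}.$$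
   Context: First-price auctions (no reserve price) with $n\in\{n_1,n_2\}$ bidders, $2\le n_1<n_2$. Bidders' values are i.i.d. from $F_0$ on $[\underline v,\overline v]$ with continuous density $f_0>0$. Utility is CRRA, $u(w)=w^{1-\theta}/(1-\theta)$, $\theta\in[0,1)$. Bidders have maxmin expected utility over a weakly compact convex set $\Gamma$ of strictly increasing $C^1$ distributions on $[\underline v,\overline v]$ containing $F_0$ with least element $F^*\in\Gamma$ ($F^*\le F$ pointwise for all $F\in\Gamma$) having density $f^*>0$; $D(\gamma):=F^*(F_0^{-1}(\gamma))$, which is strictly increasing, $C^1$, with $D(0)=0$, $D(1)=1$, $D'(0)>0$. $F_0$ and $\Gamma$ do not depend on $n$ (exogenous participation). For $n$ bidders the symmetric equilibrium is a strictly increasing differentiable $\beta_n$ such that for every value $v$, $x=v$ maximizes $u[v-\beta_n(x)]D[F_0(x)]^{n-1}$; $G(\cdot\mid n)$ is the distribution of $\beta_n(v)$, $v\sim F_0$, with density $g(\cdot\mid n)$, assumed positive and continuous on its support, and $\underline b^j=\beta_{n_j}(\underline v)$. *)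

From Stdlib Require Import Reals.
Open Scope R_scope.

Definition cont_on (f : R -> R) (a b : R) : Prop :=
  forall x, a <= x <= b -> limit1_in f (fun y => a <= y <= b) (f x) x.

Definition strict_incr_on (f : R -> R) (a b : R) : Prop :=
  forall x y, a <= x -> x < y -> y <= b -> f x < f y.

(* F is the c.d.f. of a distribution supported on [a,b], with density f
   continuous on [a,b] (F' = f on (a,b); at the endpoints f is the
   continuous extension, i.e. the one-sided derivative). *)
Definition cdf_with_density (a b : R) (F f : R -> R) : Prop :=
  a < b /\ F a = 0 /\ F b = 1 /\
  (forall x, x < a -> F x = 0) /\ (forall x, b < x -> F x = 1) /\
  cont_on F a b /\
  (forall x, a < x < b -> derivable_pt_lim F x (f x)) /\
  cont_on f a b.

Definition C1_on (g g' : R -> R) (a b : R) : Prop :=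
  cont_on g a b /\ (forall x, a < x < b -> derivable_pt_lim g x (g' x)) /\
  cont_on g' a b.

(* CRRA utility u(w) = w^(1-θ)/(1-θ) for w >= 0; for w < 0 (overbidding,
   never optimal) we use the odd extension, which is strictly negative. *)
Definition crra (theta w : R) : R :=
  if Rlt_dec 0 w then Rpower w (1 - theta) / (1 - theta)
  else if Rlt_dec w 0 then - (Rpower (- w) (1 - theta) / (1 - theta))
  else 0.

(* Γ: set of strictly increasing C^1 distributions on [vl,vh], convex.
   (Weak compactness is not modelled.) *)
Definition ambiguity_set (vl vh : R) (Gam : (R -> R) -> Prop) : Prop :=
  (forall F, Gam F -> exists f, cdf_with_density vl vh F f /\ strict_incr_on F vl vh) /\
  (forall F1 F2 l, Gam F1 -> Gam F2 -> 0 <= l <= 1 ->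
     Gam (fun x => l * F1 x + (1 - l) * F2 x)).

Definition equilibrium (vl vh theta : R) (F0 D : R -> R) (n : nat) (beta : R -> R) : Prop :=
  strict_incr_on beta vl vh /\ cont_on beta vl vh /\
  (forall v, vl < v < vh -> exists l, derivable_pt_lim beta v l) /\
  (forall v x, vl <= v <= vh -> vl <= x <= vh ->
     crra theta (v - beta x) * D (F0 x) ^ (n - 1)
       <= crra theta (v - beta v) * D (F0 v) ^ (n - 1)).

Definition bid_distribution (vl vh : R) (F0 beta G g : R -> R) : Prop :=
  cdf_with_density (beta vl) (beta vh) G g /\
  (forall b, beta vl <= b <= beta vh -> 0 < g b) /\
  (forall v, vl <= v <= vh -> G (beta v) = F0 v).

Definition is_quantile (a b : R) (F : R -> R) (gamma q : R) : Prop :=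
  a <= q <= b /\ F q = gamma.

Definition Hfun (D Dp : R -> R) (gamma : R) : R := D gamma / Dp gamma.

(* The first-order condition of the bidding problem, after substituting
   [Fs = D o F0] and [G o beta = F0], reads
   [(1 - θ) f0 Fs = (n - 1) (v - beta v) fs g(beta v)].  Since [fs = D'(F0) f0],
   at the γ-quantiles it becomes [v = b + (1 - θ) H(γ) / ((n - 1) g(b))].
   Subtracting the versions for n1 and n2 bidders solves for H(γ), because
   [beta_n1 < beta_n2] above [vl]: [Fs^m (beta_n1 - beta_n2)] with
   [m = (n2 - 1)/(1 - θ)] is decreasing and vanishes at [vl].  Dividing the first-order condition by
   [(v - vl)(beta v - vl)] and letting [v -> vl] gives
   [(n - 1) g(vl) = f0(vl) (n - θ)]; the two instances of this identify θ. *)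

From Stdlib Require Import Reals Ranalysis5 Lra Lia Psatz.
Open Scope R_scope.

(** * Real analysis on a closed interval *)

Definition clamp (a b x : R) : R := Rmax a (Rmin b x).

Lemma clamp_in a b x : a <= b -> a <= clamp a b x <= b.
Proof. intros; unfold clamp, Rmax, Rmin; repeat destruct (Rle_dec _ _); lra. Qed.

Lemma clamp_id a b x : a <= x <= b -> clamp a b x = x.
Proof. intros; unfold clamp, Rmax, Rmin; repeat destruct (Rle_dec _ _); lra. Qed.

Lemma clamp_lipschitz a b x y :
  a <= b -> Rabs (clamp a b x - clamp a b y) <= Rabs (x - y).
Proof. intros; unfold clamp, Rmax, Rmin; repeat destruct (Rle_dec _ _); split_Rabs; lra. Qed.

(* Clamping turns continuity on [a,b] into continuity everywhere, so that the
   Stdlib theorems stated with [continuity_pt] apply. *)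
Lemma continuity_pt_clamp f a b x :
  a <= b -> cont_on f a b -> continuity_pt (fun t => f (clamp a b t)) x.
Proof.
  intros Hab Hf eps Heps.
  destruct (Hf (clamp a b x) (clamp_in a b x Hab) eps Heps) as [d [Hd Hfd]].
  exists d; split; [exact Hd|]. intros y [_ Hy]. simpl in *. unfold Rdist in *.
  apply Hfd. split; [now apply clamp_in|].
  eapply Rle_lt_trans; [apply clamp_lipschitz|]; assumption.
Qed.

Lemma cont_on_restrict f a b a' b' :
  cont_on f a b -> a <= a' -> b' <= b -> cont_on f a' b'.
Proof.
  intros Hf Ha Hb x Hx eps Heps. destruct (Hf x ltac:(lra) eps Heps) as [d [Hd Hfd]].
  exists d; split; [exact Hd|]. intros y [Hy Hyx]. apply Hfd. split; [lra|exact Hyx].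
Qed.

Lemma MVT_cont_on f f' a b :
  a < b -> cont_on f a b -> (forall x, a < x < b -> derivable_pt_lim f x (f' x)) ->
  exists c, a < c < b /\ f b - f a = f' c * (b - a).
Proof.
  intros Hab Hc Hd.
  set (h := fun t => f (clamp a b t)).
  assert (Hh : forall c, a < c < b -> derivable_pt_lim h c (f' c)).
  { intros c Hcab. apply (derivable_pt_lim_locally_ext f h c a b); [exact Hcab| |now apply Hd].
    intros z Hz. unfold h. rewrite clamp_id; lra. }
  assert (pr1 : forall c, a < c < b -> derivable_pt h c)
    by (intros c Hcab; exists (f' c); exact (Hh c Hcab)).
  assert (pr2 : forall c, a < c < b -> derivable_pt id c) by (intros; apply derivable_pt_id).
  assert (Hch : forall c, a <= c <= b -> continuity_pt h c)
    by (intros c _; apply continuity_pt_clamp; [lra|exact Hc]).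
  assert (Hcid : forall c, a <= c <= b -> continuity_pt id c)
    by (intros c _; apply derivable_continuous_pt, derivable_pt_id).
  destruct (MVT h id a b pr1 pr2 Hab Hch Hcid) as [c [Hcab Hmvt]].
  exists c; split; [exact Hcab|].
  rewrite (derive_pt_eq_0 h c (f' c) (pr1 c Hcab) (Hh c Hcab)) in Hmvt.
  rewrite (derive_pt_eq_0 id c 1 (pr2 c Hcab) (derivable_pt_lim_id c)) in Hmvt.
  unfold h, id in Hmvt. rewrite !clamp_id in Hmvt; lra.
Qed.

Lemma IVT_cont_on f a b y :
  a < b -> cont_on f a b -> f a <= y <= f b -> exists x, a <= x <= b /\ f x = y.
Proof.
  intros Hab Hc Hy.
  destruct (Req_dec y (f a)) as [E|E]; [exists a; split; [lra|auto]|].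
  destruct (Req_dec y (f b)) as [E'|E']; [exists b; split; [lra|auto]|].
  set (h := fun t => f (clamp a b t) - y).
  destruct (IVT_interv h a b) as [z [Hz Hhz]]; [| |unfold h; rewrite clamp_id; lra
    |unfold h; rewrite clamp_id; lra|].
  - intros z _. apply continuity_pt_minus; [|apply continuity_pt_const; now intros u v].
    apply continuity_pt_clamp; [lra|exact Hc].
  - exact Hab.
  - exists z; split; [exact Hz|]. unfold h in Hhz. rewrite clamp_id in Hhz; lra.
Qed.

Lemma limit1_in_sub_domain f D D' l x :
  limit1_in f D l x -> (forall y, D' y -> D y) -> limit1_in f D' l x.
Proof.
  intros Hf HD eps Heps. destruct (Hf eps Heps) as [d [Hd Hfd]].
  exists d; split; [exact Hd|]. intros y [Hy Hyx]. apply Hfd. split; [now apply HD|exact Hyx].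
Qed.

Lemma limit1_in_comp_cont_on u h D l x0 c d :
  limit1_in u D l x0 -> (forall y, D y -> c <= u y <= d) -> cont_on h c d -> c <= l <= d ->
  limit1_in (fun y => h (u y)) D (h l) x0.
Proof.
  intros Hu Hrange Hh Hl.
  apply limit1_in_sub_domain with (Dgf D (fun z => c <= z <= d) u).
  - apply limit_comp with l; [exact Hu|now apply Hh].
  - intros y Hy; split; [exact Hy|now apply Hrange].
Qed.

Lemma limit1_in_comp_continuity_pt u h D l x0 :
  limit1_in u D l x0 -> continuity_pt h l -> limit1_in (fun y => h (u y)) D (h l) x0.
Proof.
  intros Hu Hh eps Heps. destruct (Hh eps Heps) as [a [Ha Hha]].
  destruct (Hu a Ha) as [d [Hd Hud]]. exists d; split; [exact Hd|].
  intros y Hy. destruct (Req_dec (u y) l) as [E|E].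
  - rewrite E. simpl. unfold Rdist. now rewrite Rminus_diag, Rabs_R0.
  - apply (Hha (u y)). split; [split; [exact I|auto]|]. now apply Hud.
Qed.

Lemma limit1_in_squeeze u w D l x0 :
  limit1_in u D l x0 -> (forall y, D y -> Rabs (w y - l) <= Rabs (u y - l)) ->
  limit1_in w D l x0.
Proof.
  intros Hu Hwu eps Heps. destruct (Hu eps Heps) as [d [Hd Hud]].
  exists d; split; [exact Hd|]. intros y Hy. simpl. unfold Rdist.
  eapply Rle_lt_trans; [apply Hwu, Hy|apply (Hud y Hy)].
Qed.

Lemma adhDa_open_interval a b x0 : a < b -> a <= x0 <= b -> adhDa (fun y => a < y < b) x0.
Proof.
  intros Hab Hx d Hd. unfold Rdist.
  pose proof (Rmin_l d ((b - a) / 2)); pose proof (Rmin_r d ((b - a) / 2)).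
  assert (0 < Rmin d ((b - a) / 2)) by (apply Rmin_pos; lra).
  destruct (Rle_dec x0 ((a + b) / 2)).
  - exists (x0 + Rmin d ((b - a) / 2) / 2). split; [lra|split_Rabs; lra].
  - exists (x0 - Rmin d ((b - a) / 2) / 2). split; [lra|split_Rabs; lra].
Qed.

Lemma limit1_in_vanishing P D L x0 :
  adhDa D x0 -> limit1_in P D L x0 -> (forall y, D y -> P y = 0) -> L = 0.
Proof.
  intros Hadh HL Hzero. apply (single_limit P D L 0 x0 Hadh HL).
  intros eps Heps. exists 1; split; [lra|]. intros y [Hy _].
  simpl. unfold Rdist. now rewrite Hzero, Rminus_diag, Rabs_R0.
Qed.

Lemma cont_on_vanishing P a b :
  a < b -> cont_on P a b -> (forall y, a < y < b -> P y = 0) ->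
  forall x, a <= x <= b -> P x = 0.
Proof.
  intros Hab HP Hzero x Hx. apply (limit1_in_vanishing P (fun y => a < y < b) (P x) x).
  - now apply adhDa_open_interval.
  - apply limit1_in_sub_domain with (fun y => a <= y <= b); [now apply HP|intros; lra].
  - exact Hzero.
Qed.

Lemma difference_quotient_limit F f a b :
  a < b -> cont_on F a b -> (forall x, a < x < b -> derivable_pt_lim F x (f x)) ->
  cont_on f a b ->
  limit1_in (fun x => (F x - F a) / (x - a)) (fun x => a < x < b) (f a) a.
Proof.
  intros Hab HF HdF Hf eps Heps.
  destruct (Hf a ltac:(lra) eps Heps) as [d [Hd Hfd]].
  exists d; split; [exact Hd|]. intros x [Hx Hxa]. simpl in *. unfold Rdist in *.
  destruct (MVT_cont_on F f a x) as [c [Hc Hmvt]].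
  - lra.
  - apply cont_on_restrict with a b; [exact HF|lra|lra].
  - intros y Hy. apply HdF. lra.
  - rewrite Hmvt. replace (f c * (x - a) / (x - a)) with (f c) by (field; lra).
    apply Hfd. split; [lra|]. unfold Rdist. split_Rabs; lra.
Qed.

Lemma local_max_derivative_zero f c l d :
  derivable_pt_lim f c l -> 0 < d -> (forall y, Rabs (y - c) < d -> f y <= f c) -> l = 0.
Proof.
  intros Hf Hd Hmax. assert (pr : derivable_pt f c) by (exists l; exact Hf).
  rewrite <- (derive_pt_eq_0 f c l pr Hf).
  apply (deriv_maximum f (c - d) (c + d) c pr); try lra.
  intros x H1 H2. apply Hmax. split_Rabs; lra.
Qed.

Lemma strict_decr_limit0_neg L a b :
  (forall x y, a < x -> x < y -> y <= b -> L y < L x) ->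
  limit1_in L (fun x => a < x < b) 0 a -> forall v, a < v <= b -> L v < 0.
Proof.
  intros Hdecr Hlim v Hv.
  set (c := (a + v) / 2).
  assert (Hc : L v < L c) by (apply Hdecr; unfold c; lra).
  destruct (Rlt_le_dec (L v) 0) as [|Hge]; [assumption|exfalso].
  destruct (Hlim (L c) ltac:(lra)) as [d [Hd Hd']].
  pose proof (Rmin_l d (c - a)); pose proof (Rmin_r d (c - a)).
  assert (0 < Rmin d (c - a)) by (apply Rmin_pos; unfold c; lra).
  set (x := a + Rmin d (c - a) / 2).
  assert (Hx : L c < L x) by (apply Hdecr; unfold x, c in *; lra).
  assert (Hxa : Rabs (L x - 0) < L c).
  { apply (Hd' x). split; [unfold x, c in *; lra|]. simpl; unfold Rdist, x. split_Rabs; lra. }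
  split_Rabs; lra.
Qed.

Lemma strict_incr_on_le f a b x y :
  strict_incr_on f a b -> a <= x -> x <= y -> y <= b -> f x <= f y.
Proof. intros Hf H1 H2 H3. destruct (Req_dec x y) as [->|]; [lra|]. left; apply Hf; lra. Qed.

Lemma strict_incr_on_inj f a b x y :
  strict_incr_on f a b -> a <= x <= b -> a <= y <= b -> f x = f y -> x = y.
Proof.
  intros Hf Hx Hy E. destruct (Rtotal_order x y) as [L|[L|L]]; [|exact L|].
  - assert (f x < f y) by (apply Hf; lra). lra.
  - assert (f y < f x) by (apply Hf; lra). lra.
Qed.

Lemma Rpower_pos x y : 0 < Rpower x y.
Proof. apply exp_pos. Qed.

Lemma Rpower_le_1 x y : 0 < x <= 1 -> 0 <= y -> Rpower x y <= 1.
Proof.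
  intros Hx Hy. replace 1 with (Rpower 1 y) by (unfold Rpower; now rewrite ln_1, Rmult_0_r, exp_0).
  now apply Rle_Rpower_l.
Qed.

Lemma log_derivative_integral D Dp a b :
  a <= b -> C1_on D Dp a b -> (forall t, a <= t <= b -> 0 < D t) ->
  exists pr : Riemann_integrable (fun t => / Hfun D Dp t) a b,
    D a = D b * exp (- RiemannInt pr).
Proof.
  intros Hab [HDc [HDd HDpc]] HDpos.
  destruct (Req_dec a b) as [<-|Hne].
  { exists (RiemannInt_P7 (fun t => / Hfun D Dp t) a).
    rewrite RiemannInt_P9, Ropp_0, exp_0; ring. }
  set (k := fun t => Dp (clamp a b t) / D (clamp a b t)).
  assert (Hk : forall x, a <= x <= b -> k x = / Hfun D Dp x).
  { intros x Hx. unfold k, Hfun. now rewrite clamp_id, Rinv_div. }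
  assert (Hkc : forall x, a <= x <= b -> continuity_pt k x).
  { intros x _. apply continuity_pt_div; try (apply continuity_pt_clamp; assumption).
    pose proof (HDpos _ (clamp_in a b x Hab)). lra. }
  set (prk := @continuity_implies_RiemannInt k a b Hab Hkc).
  assert (Hext : forall x, Rmin a b <= x <= Rmax a b -> k x = / Hfun D Dp x)
    by (rewrite Rmin_left, Rmax_right; assumption).
  exists (@Riemann_integrable_ext k (fun t => / Hfun D Dp t) a b Hext prk).
  rewrite (RiemannInt_P18 _ prk Hab) by (intros x Hx; symmetry; apply Hk; lra).
  rewrite (RiemannInt_P20 Hab (FTC_P1 Hab Hkc) prk).
  set (P := primitive Hab (FTC_P1 Hab Hkc)).
  assert (HPd : forall x, a <= x <= b -> derivable_pt_lim P x (k x))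
    by (intros x Hx; now apply RiemannInt_P28).
  (* [P - ln o D] has derivative [k - D'/D = 0] on (a,b), hence is constant. *)
  destruct (MVT_cont_on (fun x => P x - ln (D x)) (fun _ => 0) a b) as [c [_ Hc]].
  - lra.
  - intros x Hx. apply limit_minus.
    + apply limit1_in_comp_continuity_pt with (1 := lim_x _ x).
      apply derivable_continuous_pt. exists (k x). now apply HPd.
    + apply limit1_in_comp_continuity_pt; [now apply HDc|].
      apply derivable_continuous_pt. exists (/ D x). apply derivable_pt_lim_ln. now apply HDpos.
  - intros x Hx. replace 0 with (k x - / D x * Dp x).
    + apply derivable_pt_lim_minus; [apply HPd; lra|].
      apply (derivable_pt_lim_comp D ln); [now apply HDd|].
      apply derivable_pt_lim_ln. apply HDpos; lra.
    + unfold k. rewrite clamp_id by lra. pose proof (HDpos x ltac:(lra)). field. lra.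
  - replace (- (P b - P a)) with (ln (D a) + - ln (D b)) by lra.
    rewrite exp_plus, exp_Ropp, !exp_ln by (apply HDpos; lra).
    pose proof (HDpos b ltac:(lra)). field. lra.
Qed.

Lemma crra_pos theta w : theta < 1 -> 0 < w -> 0 < crra theta w.
Proof.
  intros Ht Hw. unfold crra. destruct (Rlt_dec 0 w); [|lra].
  apply Rdiv_lt_0_compat; [apply Rpower_pos|lra].
Qed.

Lemma crra_neg theta w : theta < 1 -> w < 0 -> crra theta w < 0.
Proof.
  intros Ht Hw. unfold crra. destruct (Rlt_dec 0 w); [lra|]. destruct (Rlt_dec w 0); [|lra].
  assert (0 < Rpower (- w) (1 - theta) / (1 - theta))
    by (apply Rdiv_lt_0_compat; [apply Rpower_pos|lra]).
  lra.
Qed.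

Lemma crra_0 theta : crra theta 0 = 0.
Proof. unfold crra. destruct (Rlt_dec 0 0); [lra|]. destruct (Rlt_dec 0 0); [lra|reflexivity]. Qed.

Lemma crra_marginal theta w : theta < 1 -> 0 < w ->
  crra theta w = Rpower w (- theta) * w / (1 - theta).
Proof.
  intros Ht Hw. unfold crra. destruct (Rlt_dec 0 w); [|lra].
  replace (1 - theta) with (- theta + 1) at 1 by ring.
  now rewrite Rpower_plus, Rpower_1.
Qed.

Lemma crra_derivable theta w : theta < 1 -> 0 < w ->
  derivable_pt_lim (crra theta) w (Rpower w (- theta)).
Proof.
  intros Ht Hw.
  apply (derivable_pt_lim_locally_ext (fun z => Rpower z (1 - theta) * / (1 - theta))
           _ w 0 (2 * w)).
  - lra.
  - intros z Hz. unfold crra. destruct (Rlt_dec 0 z); [reflexivity|lra].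
  - replace (Rpower w (- theta))
      with ((1 - theta) * Rpower w (1 - theta - 1) * / (1 - theta) + Rpower w (1 - theta) * 0)
      by (replace (1 - theta - 1) with (- theta) by ring; field; lra).
    apply (derivable_pt_lim_mult (fun z => Rpower z (1 - theta)) (fun _ => / (1 - theta))).
    + now apply derivable_pt_lim_power.
    + apply derivable_pt_lim_const.
Qed.

(** * First-price auctions with ambiguity *)

Section Model.

Variables (vl vh theta : R) (F0 f0 Fs fs D Dp : R -> R).
Hypotheses (Hvv : vl < vh) (Htheta : 0 <= theta < 1)
  (HF0 : cdf_with_density vl vh F0 f0) (Hf0 : forall v, vl <= v <= vh -> 0 < f0 v)
  (HF0_incr : strict_incr_on F0 vl vh)
  (HFs : cdf_with_density vl vh Fs fs) (Hfs : forall v, vl <= v <= vh -> 0 < fs v)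
  (HFs_incr : strict_incr_on Fs vl vh)
  (HDF : forall v, vl <= v <= vh -> D (F0 v) = Fs v) (HD : C1_on D Dp 0 1).

Let F0_vl : F0 vl = 0. Proof. now destruct HF0 as (_ & ? & _). Qed.
Let F0_vh : F0 vh = 1. Proof. now destruct HF0 as (_ & _ & ? & _). Qed.
Let F0_cont : cont_on F0 vl vh. Proof. now destruct HF0 as (_ & _ & _ & _ & _ & ? & _). Qed.
Let F0_deriv : forall x, vl < x < vh -> derivable_pt_lim F0 x (f0 x).
Proof. now destruct HF0 as (_ & _ & _ & _ & _ & _ & ? & _). Qed.
Let f0_cont : cont_on f0 vl vh. Proof. now destruct HF0 as (_ & _ & _ & _ & _ & _ & _ & ?). Qed.
Let Fs_vl : Fs vl = 0. Proof. now destruct HFs as (_ & ? & _). Qed.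
Let Fs_vh : Fs vh = 1. Proof. now destruct HFs as (_ & _ & ? & _). Qed.
Let Fs_cont : cont_on Fs vl vh. Proof. now destruct HFs as (_ & _ & _ & _ & _ & ? & _). Qed.
Let Fs_deriv : forall x, vl < x < vh -> derivable_pt_lim Fs x (fs x).
Proof. now destruct HFs as (_ & _ & _ & _ & _ & _ & ? & _). Qed.
Let fs_cont : cont_on fs vl vh. Proof. now destruct HFs as (_ & _ & _ & _ & _ & _ & _ & ?). Qed.

Lemma F0_range v : vl <= v <= vh -> 0 <= F0 v <= 1.
Proof.
  intros Hv. rewrite <- F0_vl, <- F0_vh.
  split; apply (strict_incr_on_le F0 vl vh); auto; lra.
Qed.

Lemma F0_onto t : 0 <= t <= 1 -> exists v, vl <= v <= vh /\ F0 v = t.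
Proof. intros Ht. apply IVT_cont_on; [exact Hvv|exact F0_cont|lra]. Qed.

Lemma Fs_pos v : vl < v <= vh -> 0 < Fs v.
Proof. intros Hv. rewrite <- Fs_vl. apply HFs_incr; lra. Qed.

Lemma Fs_le_1 v : vl <= v <= vh -> Fs v <= 1.
Proof. intros Hv. rewrite <- Fs_vh. apply (strict_incr_on_le Fs vl vh); auto; lra. Qed.

Lemma distortion_chain_rule v : vl <= v <= vh -> Dp (F0 v) * f0 v = fs v.
Proof.
  destruct HD as [HDc [HDd HDpc]]. revert v.
  enough (Hzero : forall v, vl <= v <= vh -> Dp (F0 v) * f0 v - fs v = 0)
    by (intros v Hv; apply Rminus_diag_uniq, Hzero, Hv).
  apply cont_on_vanishing; [exact Hvv| |].
  - intros x Hx. apply limit_minus; [apply limit_mul|now apply fs_cont].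
    + apply limit1_in_comp_cont_on with 0 1; [now apply F0_cont|exact F0_range|exact HDpc|].
      now apply F0_range.
    + now apply f0_cont.
  - intros y Hy.
    assert (Hy0 : 0 < F0 y < 1) by (rewrite <- F0_vl, <- F0_vh; split; apply HF0_incr; lra).
    assert (HFs' : derivable_pt_lim Fs y (Dp (F0 y) * f0 y)).
    { apply (derivable_pt_lim_locally_ext (fun x => D (F0 x)) Fs y vl vh _ Hy).
      - intros z Hz. apply HDF. lra.
      - apply (derivable_pt_lim_comp F0 D); [now apply F0_deriv|now apply HDd]. }
    rewrite (uniqueness_limite Fs y _ _ HFs' (Fs_deriv y Hy)). ring.
Qed.

Lemma D_pos t : 0 < t <= 1 -> 0 < D t.
Proof.
  intros Ht. destruct (F0_onto t ltac:(lra)) as [v [Hv <-]].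
  rewrite HDF by exact Hv. apply Fs_pos. split; [|lra].
  destruct (Req_dec v vl) as [->|]; lra.
Qed.

Lemma D_exp_integral gamma : D 1 = 1 -> 0 < gamma <= 1 ->
  exists pr : Riemann_integrable (fun t => / Hfun D Dp t) gamma 1,
    D gamma = exp (- RiemannInt pr).
Proof.
  intros HD1 Hg. destruct HD as [HDc [HDd HDpc]].
  destruct (log_derivative_integral D Dp gamma 1) as [pr Hpr].
  - lra.
  - repeat split.
    + apply cont_on_restrict with 0 1; [exact HDc|lra|lra].
    + intros x Hx. apply HDd. lra.
    + apply cont_on_restrict with 0 1; [exact HDpc|lra|lra].
  - intros t Ht. apply D_pos. lra.
  - exists pr. now rewrite Hpr, HD1, Rmult_1_l.
Qed.

Section Auction.

Variables (n : nat) (beta G g : R -> R).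
Hypotheses (Hn : (2 <= n)%nat) (Heq : equilibrium vl vh theta F0 D n beta)
  (Hbid : bid_distribution vl vh F0 beta G g).

Let beta_incr : strict_incr_on beta vl vh. Proof. now destruct Heq. Qed.
Let beta_cont : cont_on beta vl vh. Proof. now destruct Heq as (_ & ? & _). Qed.
Let beta_derivable : forall v, vl < v < vh -> exists l, derivable_pt_lim beta v l.
Proof. now destruct Heq as (_ & _ & ? & _). Qed.
Let G_cont : cont_on G (beta vl) (beta vh).
Proof. now destruct Hbid as ((_ & _ & _ & _ & _ & ? & _) & _). Qed.
Let G_deriv : forall b, beta vl < b < beta vh -> derivable_pt_lim G b (g b).
Proof. now destruct Hbid as ((_ & _ & _ & _ & _ & _ & ? & _) & _). Qed.
Let g_cont : cont_on g (beta vl) (beta vh).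
Proof. now destruct Hbid as ((_ & _ & _ & _ & _ & _ & _ & ?) & _). Qed.
Let g_pos : forall b, beta vl <= b <= beta vh -> 0 < g b.
Proof. now destruct Hbid as (_ & ? & _). Qed.
Let G_beta : forall v, vl <= v <= vh -> G (beta v) = F0 v.
Proof. now destruct Hbid as (_ & _ & ?). Qed.
Let n_pos : 0 < INR n - 1.
Proof. assert (H2 : INR 2 <= INR n) by (apply le_INR; exact Hn). simpl in H2. lra. Qed.

Lemma payoff_max v x : vl <= v <= vh -> vl <= x <= vh ->
  crra theta (v - beta x) * Fs x ^ (n - 1) <= crra theta (v - beta v) * Fs v ^ (n - 1).
Proof.
  intros Hv Hx. destruct Heq as (_ & _ & _ & Hopt).
  rewrite <- !HDF by assumption. now apply Hopt.
Qed.

Lemma bid_range v : vl <= v <= vh -> beta vl <= beta v <= beta vh.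
Proof. intros Hv. split; apply (strict_incr_on_le beta vl vh); auto; lra. Qed.

(* Deviating to [vl] yields payoff 0, and bidding one's value yields payoff 0
   while a slightly lower bid wins with positive probability at a profit. *)
Lemma bid_lt_value v : vl < v <= vh -> beta v < v.
Proof.
  intros Hv.
  assert (Hpow : forall x, vl < x <= vh -> 0 < Fs x ^ (n - 1))
    by (intros x Hx; apply pow_lt, Fs_pos; lra).
  assert (Hlow := payoff_max v vl ltac:(lra) ltac:(lra)).
  rewrite Fs_vl, pow_i, Rmult_0_r in Hlow by lia.
  destruct (Rtotal_order (beta v) v) as [|[Heqv|Hgt]]; [assumption|exfalso|exfalso].
  - set (x := (vl + v) / 2).
    assert (beta x < beta v) by (apply beta_incr; unfold x; lra).
    assert (Hx := payoff_max v x ltac:(lra) ltac:(unfold x; lra)).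
    rewrite Heqv, Rminus_diag, crra_0, Rmult_0_l in Hx.
    assert (0 < crra theta (v - beta x)) by (apply crra_pos; lra).
    pose proof (Hpow x ltac:(unfold x; lra)). nra.
  - assert (crra theta (v - beta v) < 0) by (apply crra_neg; lra).
    pose proof (Hpow v Hv). nra.
Qed.

Lemma bid_foc v l : vl < v < vh -> derivable_pt_lim beta v l ->
  (1 - theta) * l * Fs v = (INR n - 1) * (v - beta v) * fs v.
Proof.
  intros Hv Hl. assert (Hw : 0 < v - beta v) by (pose proof (bid_lt_value v); lra).
  assert (Hdpsi : derivable_pt_lim (fun y => crra theta (v - beta y) * Fs y ^ (n - 1)) v
    (Rpower (v - beta v) (- theta) * (0 - l) * Fs v ^ (n - 1)
     + crra theta (v - beta v) * (INR (n - 1) * Fs v ^ pred (n - 1) * fs v))).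
  { apply (derivable_pt_lim_mult (fun y => crra theta (v - beta y)) (fun y => Fs y ^ (n - 1))).
    - apply (derivable_pt_lim_comp (fun y => v - beta y) (crra theta)).
      + apply (derivable_pt_lim_minus (fun _ => v)); [apply derivable_pt_lim_const|exact Hl].
      + apply crra_derivable; lra.
    - apply (derivable_pt_lim_comp Fs (fun z => z ^ (n - 1))).
      + now apply Fs_deriv.
      + apply derivable_pt_lim_pow. }
  apply local_max_derivative_zero with (d := Rmin (v - vl) (vh - v)) in Hdpsi.
  - replace (n - 1)%nat with (S (n - 2)) in Hdpsi by lia.
    rewrite S_INR, minus_INR in Hdpsi by lia. simpl pred in Hdpsi. simpl pow in Hdpsi.
    rewrite crra_marginal in Hdpsi by lra.
    replace (INR 2) with 2 in Hdpsi by (simpl; ring).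
    set (K := Rpower (v - beta v) (- theta) * Fs v ^ (n - 2) / (1 - theta)).
    assert (HK : 0 < K).
    { apply Rdiv_lt_0_compat; [|lra]. apply Rmult_lt_0_compat; [apply Rpower_pos|].
      apply pow_lt, Fs_pos; lra. }
    assert (Hfactor : K * ((INR n - 1) * (v - beta v) * fs v - (1 - theta) * l * Fs v) = 0)
      by (rewrite <- Hdpsi; unfold K; field; lra).
    apply Rmult_integral in Hfactor as [|]; lra.
  - apply Rmin_pos; lra.
  - intros y Hy. pose proof (Rmin_l (v - vl) (vh - v)); pose proof (Rmin_r (v - vl) (vh - v)).
    apply payoff_max; split_Rabs; lra.
Qed.

Lemma bid_density v l : vl < v < vh -> derivable_pt_lim beta v l -> f0 v = g (beta v) * l.
Proof.
  intros Hv Hl. apply (uniqueness_limite F0 v); [now apply F0_deriv|].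
  apply (derivable_pt_lim_locally_ext (fun y => G (beta y)) F0 v vl vh _ Hv).
  - intros y Hy. apply G_beta. lra.
  - apply (derivable_pt_lim_comp beta G); [exact Hl|].
    apply G_deriv. split; apply beta_incr; lra.
Qed.

Lemma bid_derivative v : vl < v < vh ->
  derivable_pt_lim beta v ((INR n - 1) * (v - beta v) * fs v / ((1 - theta) * Fs v)).
Proof.
  intros Hv. destruct (beta_derivable v Hv) as [l Hl].
  rewrite <- (bid_foc v l Hv Hl). replace (_ / _) with l; [exact Hl|].
  pose proof (Fs_pos v ltac:(lra)). field. lra.
Qed.

Lemma foc_closed v : vl <= v <= vh ->
  (1 - theta) * f0 v * Fs v = (INR n - 1) * (v - beta v) * fs v * g (beta v).
Proof.
  revert v. enough (Hzero : forall v, vl <= v <= vh ->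
    (1 - theta) * f0 v * Fs v - (INR n - 1) * (v - beta v) * fs v * g (beta v) = 0)
    by (intros v Hv; apply Rminus_diag_uniq, Hzero, Hv).
  apply cont_on_vanishing; [exact Hvv| |].
  - intros x Hx. apply limit_minus; repeat apply limit_mul.
    + apply limit_free.
    + now apply f0_cont.
    + now apply Fs_cont.
    + apply limit_free.
    + apply limit_minus; [apply lim_x|now apply beta_cont].
    + now apply fs_cont.
    + apply limit1_in_comp_cont_on with (beta vl) (beta vh);
        [now apply beta_cont|exact bid_range|exact g_cont|now apply bid_range].
  - intros y Hy. destruct (beta_derivable y Hy) as [l Hl].
    rewrite (bid_density y l Hy Hl).
    replace ((1 - theta) * (g (beta y) * l) * Fs y)
      with (g (beta y) * ((1 - theta) * l * Fs y)) by ring.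
    rewrite (bid_foc y l Hy Hl). ring.
Qed.

Lemma lowest_bid : beta vl = vl.
Proof.
  pose proof (foc_closed vl ltac:(lra)) as Hfoc. rewrite Fs_vl, Rmult_0_r in Hfoc.
  assert (0 < fs vl) by (apply Hfs; lra).
  assert (0 < g (beta vl)) by (apply g_pos, bid_range; lra).
  assert (Hprod : (vl - beta vl) * ((INR n - 1) * fs vl * g (beta vl)) = 0) by lra.
  apply Rmult_integral in Hprod as [|Hprod]; [lra|].
  assert (0 < (INR n - 1) * fs vl * g (beta vl)) by (repeat apply Rmult_lt_0_compat; lra).
  lra.
Qed.

Lemma bid_of_quantile gamma v b :
  is_quantile vl vh F0 gamma v -> is_quantile (beta vl) (beta vh) G gamma b -> b = beta v.
Proof.
  intros [Hv Hvg] [Hb Hbg].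
  destruct (IVT_cont_on beta vl vh b Hvv beta_cont Hb) as [w [Hw <-]].
  rewrite G_beta in Hbg by exact Hw.
  f_equal. apply (strict_incr_on_inj F0 vl vh); auto. congruence.
Qed.

(* With [G (beta v) = F0 v], this yields the right derivative [f0 vl / g vl]
   of [beta] at [vl]. *)
Lemma bid_slope_limit :
  limit1_in (fun v => (G (beta v) - G vl) / (beta v - vl)) (fun v => vl < v < vh) (g vl) vl.
Proof.
  pose proof lowest_bid as Hlow.
  assert (Hbvh : vl < beta vh) by (rewrite <- Hlow; apply beta_incr; lra).
  apply limit1_in_sub_domain with (Dgf (fun v => vl < v < vh) (fun b => vl < b < beta vh) beta).
  - apply (limit_comp beta (fun b => (G b - G vl) / (b - vl))) with vl.
    + assert (Hb := beta_cont vl ltac:(lra)). rewrite Hlow in Hb.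
      apply limit1_in_sub_domain with (fun v => vl <= v <= vh); [exact Hb|intros; lra].
    + rewrite Hlow in G_deriv, G_cont, g_cont.
      apply difference_quotient_limit; assumption.
  - intros v Hv. split; [exact Hv|]. rewrite <- Hlow at 1. split; apply beta_incr; lra.
Qed.

Lemma density_at_lowest_bid : (INR n - 1) * g (beta vl) = f0 vl * (INR n - theta).
Proof.
  pose proof lowest_bid as Hlow.
  assert (HGvl : G vl = 0) by (rewrite <- Hlow at 1; rewrite G_beta; [exact F0_vl|lra]).
  set (Dm := fun v => vl < v < vh).
  set (slope := fun F v => (F v - F vl) / (v - vl)).
  set (Gslope := fun v => (G (beta v) - G vl) / (beta v - vl)).
  set (Q := fun v => (1 - theta) * f0 v * slope Fs v * Gslope v
                     - (INR n - 1) * (Gslope v - slope F0 v) * fs v * g (beta v)).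
  (* [Q v] is the defect of [foc_closed v] times [F0 v / ((v - vl) (beta v - vl))]. *)
  assert (HQ : forall v, Dm v -> Q v = 0).
  { intros v Hv. unfold Dm in Hv.
    assert (Hbv : vl < beta v) by (rewrite <- Hlow at 1; apply beta_incr; lra).
    assert (Hfoc := foc_closed v ltac:(lra)).
    unfold Q, Gslope, slope; cbv beta. rewrite G_beta, HGvl, F0_vl, Fs_vl by lra.
    replace (_ - _) with (F0 v / ((v - vl) * (beta v - vl)) *
      ((1 - theta) * f0 v * Fs v - (INR n - 1) * (v - beta v) * fs v * g (beta v)))
      by (field; lra).
    rewrite Hfoc. ring. }
  assert (HQlim : limit1_in Q Dm ((1 - theta) * f0 vl * fs vl * g vl
                                  - (INR n - 1) * (g vl - f0 vl) * fs vl * g vl) vl).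
  { assert (Hsub : forall y, Dm y -> vl <= y <= vh) by (unfold Dm; intros; lra).
    apply limit_minus; repeat apply limit_mul.
    - apply limit_free.
    - apply limit1_in_sub_domain with (1 := f0_cont vl ltac:(lra)), Hsub.
    - now apply difference_quotient_limit.
    - exact bid_slope_limit.
    - apply limit_free.
    - apply limit_minus; [exact bid_slope_limit|now apply difference_quotient_limit].
    - apply limit1_in_sub_domain with (1 := fs_cont vl ltac:(lra)), Hsub.
    - rewrite <- Hlow at 1.
      apply limit1_in_comp_cont_on with (beta vl) (beta vh); [|intros; apply bid_range, Hsub;
        assumption|exact g_cont|apply bid_range; lra].
      apply limit1_in_sub_domain with (1 := beta_cont vl ltac:(lra)), Hsub. }
  pose proof (limit1_in_vanishing Q Dm _ vl (adhDa_open_interval vl vh vl Hvv ltac:(lra))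
                HQlim HQ) as Hzero.
  rewrite Hlow. assert (0 < fs vl) by (apply Hfs; lra).
  assert (0 < g vl) by (rewrite <- Hlow; apply g_pos, bid_range; lra).
  assert (Hprod : fs vl * g vl * ((INR n - 1) * g vl - f0 vl * (INR n - theta)) = 0) by lra.
  apply Rmult_integral in Hprod as [Hprod|]; [|lra].
  assert (0 < fs vl * g vl) by (apply Rmult_lt_0_compat; lra). lra.
Qed.

Lemma value_of_bid_quantile gamma v b :
  is_quantile vl vh F0 gamma v -> is_quantile (beta vl) (beta vh) G gamma b ->
  v = b + (1 - theta) * Hfun D Dp gamma / ((INR n - 1) * g b).
Proof.
  intros Hqv Hqb. rewrite (bid_of_quantile gamma v b Hqv Hqb).
  destruct Hqv as [Hv <-]. unfold Hfun.
  assert (Hfoc := foc_closed v Hv).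
  rewrite <- (HDF v Hv), <- (distortion_chain_rule v Hv) in Hfoc.
  assert (0 < f0 v) by (apply Hf0; exact Hv).
  assert (0 < g (beta v)) by (apply g_pos, bid_range; exact Hv).
  assert (0 < Dp (F0 v)).
  { pose proof (distortion_chain_rule v Hv). pose proof (Hfs v Hv).
    destruct (Rlt_le_dec 0 (Dp (F0 v))); [assumption|nra]. }
  apply (Rmult_eq_reg_r ((INR n - 1) * g (beta v) * Dp (F0 v) * f0 v)).
  - transitivity (beta v * ((INR n - 1) * g (beta v) * Dp (F0 v) * f0 v)
                   + (1 - theta) * f0 v * D (F0 v)).
    + rewrite Hfoc. ring.
    + field. lra.
  - assert (0 < (INR n - 1) * g (beta v) * Dp (F0 v) * f0 v)
      by (repeat apply Rmult_lt_0_compat; lra).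
    lra.
Qed.

End Auction.


Section TwoAuctions.

Variables (n1 n2 : nat) (beta1 G1 g1 beta2 G2 g2 : R -> R).
Hypotheses (Hn1 : (2 <= n1)%nat) (Hn12 : (n1 < n2)%nat)
  (Heq1 : equilibrium vl vh theta F0 D n1 beta1) (Hbid1 : bid_distribution vl vh F0 beta1 G1 g1)
  (Heq2 : equilibrium vl vh theta F0 D n2 beta2) (Hbid2 : bid_distribution vl vh F0 beta2 G2 g2).

Let Hn2 : (2 <= n2)%nat. Proof. lia. Qed.
Let n12 : INR n1 < INR n2. Proof. now apply lt_INR. Qed.

(* [Fs ^ m] is an integrating factor for the difference of the two bid ODEs. *)
Let m := (INR n2 - 1) / (1 - theta).
Let bid_gap y := Rpower (Fs y) m * (beta1 y - beta2 y).

Lemma bid_gap_derivative x : vl < x < vh ->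
  derivable_pt_lim bid_gap x
    (- (INR n2 - INR n1) * Rpower (Fs x) (m - 1) * fs x * (x - beta1 x) / (1 - theta)).
Proof.
  intros Hx. assert (HFx : 0 < Fs x) by (apply Fs_pos; lra).
  set (d1 := (INR n1 - 1) * (x - beta1 x) * fs x / ((1 - theta) * Fs x)).
  set (d2 := (INR n2 - 1) * (x - beta2 x) * fs x / ((1 - theta) * Fs x)).
  replace (_ / (1 - theta))
    with (m * Rpower (Fs x) (m - 1) * fs x * (beta1 x - beta2 x) + Rpower (Fs x) m * (d1 - d2)).
  - unfold bid_gap.
    apply (derivable_pt_lim_mult (fun y => Rpower (Fs y) m) (fun y => beta1 y - beta2 y)).
    + apply (derivable_pt_lim_comp Fs (fun z => Rpower z m)); [now apply Fs_deriv|].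
      now apply derivable_pt_lim_power.
    + apply derivable_pt_lim_minus; eapply bid_derivative; eassumption.
  - replace (Rpower (Fs x) m) with (Rpower (Fs x) (m - 1) * Fs x)
      by (rewrite <- (Rpower_1 (Fs x)) at 2 by exact HFx; rewrite <- Rpower_plus; f_equal; ring).
    unfold d1, d2, m. field. lra.
Qed.

Lemma bid_gap_decreasing x y : vl < x -> x < y -> y <= vh -> bid_gap y < bid_gap x.
Proof.
  intros Hx Hxy Hy.
  destruct (MVT_cont_on bid_gap (fun z => - (INR n2 - INR n1) * Rpower (Fs z) (m - 1) * fs z
                                     * (z - beta1 z) / (1 - theta)) x y Hxy) as [c [Hc Hmvt]].
  - intros z Hz. apply limit_mul; [|apply limit_minus].
    + apply (limit1_in_comp_continuity_pt Fs (fun z => Rpower z m)).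
      { apply (cont_on_restrict Fs vl vh x y); auto; lra. }
      apply derivable_continuous_pt. exists (m * Rpower (Fs z) (m - 1)).
      apply derivable_pt_lim_power, Fs_pos. lra.
    + apply (cont_on_restrict beta1 vl vh x y); [apply Heq1|lra|lra|exact Hz].
    + apply (cont_on_restrict beta2 vl vh x y); [apply Heq2|lra|lra|exact Hz].
  - intros z Hz. apply bid_gap_derivative. lra.
  - set (K := Rpower (Fs c) (m - 1) * fs c * (c - beta1 c) / (1 - theta)).
    assert (HK : 0 < K).
    { apply Rdiv_lt_0_compat; [|lra]. repeat apply Rmult_lt_0_compat.
      - apply Rpower_pos.
      - apply Hfs. lra.
      - pose proof (bid_lt_value n1 beta1 Hn1 Heq1 c ltac:(lra)). lra. }
    assert (0 < (INR n2 - INR n1) * K * (y - x))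
      by (apply Rmult_lt_0_compat; [apply Rmult_lt_0_compat|]; lra).
    assert (bid_gap y - bid_gap x = - ((INR n2 - INR n1) * K * (y - x)))
      by (rewrite Hmvt; unfold K; field; lra).
    lra.
Qed.

Lemma bid_gap_limit : limit1_in bid_gap (fun y => vl < y < vh) 0 vl.
Proof.
  apply limit1_in_squeeze with (fun y => beta1 y - beta2 y).
  - replace 0 with (beta1 vl - beta2 vl)
      by (rewrite (lowest_bid n1 beta1 G1 g1), (lowest_bid n2 beta2 G2 g2) by assumption; ring).
    apply limit1_in_sub_domain with (fun y => vl <= y <= vh); [|intros; lra].
    apply limit_minus; [apply Heq1|apply Heq2]; lra.
  - intros y Hy. unfold bid_gap. rewrite !Rminus_0_r, Rabs_mult, (Rabs_pos_eq (Rpower _ _))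
      by (left; apply Rpower_pos).
    assert (Rpower (Fs y) m <= 1).
    { apply Rpower_le_1.
      - split; [apply Fs_pos|apply Fs_le_1]; lra.
      - unfold m. apply Rle_mult_inv_pos; [|lra]. pose proof (le_INR 2 n2 Hn2). simpl in *; lra. }
    pose proof (Rabs_pos (beta1 y - beta2 y)). nra.
Qed.

Lemma bids_increase_with_n v : vl < v <= vh -> beta1 v < beta2 v.
Proof.
  intros Hv. pose proof (strict_decr_limit0_neg bid_gap vl vh bid_gap_decreasing bid_gap_limit v Hv).
  unfold bid_gap in *. pose proof (Rpower_pos (Fs v) m). nra.
Qed.

Lemma theta_identified :
  theta =
    (INR n2 * (INR n1 - 1) * g1 (beta1 vl) - INR n1 * (INR n2 - 1) * g2 (beta2 vl))
    / ((INR n1 - 1) * g1 (beta1 vl) - (INR n2 - 1) * g2 (beta2 vl)).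
Proof.
  rewrite (Rmult_assoc (INR n2)), (Rmult_assoc (INR n1)).
  rewrite (density_at_lowest_bid n1 beta1 G1 g1), (density_at_lowest_bid n2 beta2 G2 g2)
    by assumption.
  assert (0 < f0 vl) by (apply Hf0; lra).
  field. intros Hzero. assert (Hprod : f0 vl * (INR n1 - INR n2) = 0) by lra.
  apply Rmult_integral in Hprod as [|]; lra.
Qed.

Lemma Hfun_of_bid_quantiles gamma b1 b2 : D 0 = 0 -> 0 <= gamma <= 1 ->
  is_quantile (beta1 vl) (beta1 vh) G1 gamma b1 ->
  is_quantile (beta2 vl) (beta2 vh) G2 gamma b2 ->
  Hfun D Dp gamma =
    (b2 - b1) / (1 - theta) * / (1 / ((INR n1 - 1) * g1 b1) - 1 / ((INR n2 - 1) * g2 b2)).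
Proof.
  intros HD0 Hg Hq1 Hq2. destruct (F0_onto gamma Hg) as [v [Hv Hvg]].
  assert (Hqv : is_quantile vl vh F0 gamma v) by (split; assumption).
  assert (Hb1 := bid_of_quantile n1 beta1 G1 g1 Heq1 Hbid1 gamma v b1 Hqv Hq1).
  assert (Hb2 := bid_of_quantile n2 beta2 G2 g2 Heq2 Hbid2 gamma v b2 Hqv Hq2).
  destruct (Req_dec v vl) as [->|Hne].
  - (* both bids are [vl], and [H 0 = D 0 / Dp 0 = 0] *)
    rewrite Hb1, Hb2, (lowest_bid n1 beta1 G1 g1), (lowest_bid n2 beta2 G2 g2) by assumption.
    rewrite <- Hvg, F0_vl. unfold Hfun. rewrite HD0. unfold Rdiv. ring.
  - assert (Hlt : b1 < b2) by (rewrite Hb1, Hb2; apply bids_increase_with_n; lra).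
    assert (E1 := value_of_bid_quantile n1 beta1 G1 g1 Hn1 Heq1 Hbid1 gamma v b1 Hqv Hq1).
    assert (E2 := value_of_bid_quantile n2 beta2 G2 g2 Hn2 Heq2 Hbid2 gamma v b2 Hqv Hq2).
    set (X1 := 1 / ((INR n1 - 1) * g1 b1)) in *. set (X2 := 1 / ((INR n2 - 1) * g2 b2)) in *.
    assert (Hgap : b2 - b1 = (1 - theta) * Hfun D Dp gamma * (X1 - X2))
      by (unfold X1, X2, Rdiv in *; lra).
    assert (X1 - X2 <> 0) by (intros Hzero; rewrite Hzero, Rmult_0_r in Hgap; lra).
    rewrite Hgap. field. lra.
Qed.

End TwoAuctions.

End Model.

Theorem mainTheorem6
  (vl vh theta : R) (n1 n2 : nat)
  (F0 f0 Fstar fstar : R -> R) (Gam : (R -> R) -> Prop)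
  (D Dp : R -> R)
  (beta1 beta2 G1 g1 G2 g2 : R -> R) :
  (2 <= n1)%nat -> (n1 < n2)%nat ->
  vl < vh -> 0 <= theta < 1 ->
  cdf_with_density vl vh F0 f0 -> (forall v, vl <= v <= vh -> 0 < f0 v) ->
  ambiguity_set vl vh Gam -> Gam F0 -> Gam Fstar ->
  (forall F, Gam F -> forall x, vl <= x <= vh -> Fstar x <= F x) ->
  cdf_with_density vl vh Fstar fstar -> (forall v, vl <= v <= vh -> 0 < fstar v) ->
  (forall v, vl <= v <= vh -> D (F0 v) = Fstar v) ->
  strict_incr_on D 0 1 -> C1_on D Dp 0 1 -> D 0 = 0 -> D 1 = 1 -> 0 < Dp 0 ->
  equilibrium vl vh theta F0 D n1 beta1 ->
  equilibrium vl vh theta F0 D n2 beta2 ->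
  bid_distribution vl vh F0 beta1 G1 g1 ->
  bid_distribution vl vh F0 beta2 G2 g2 ->
  theta =
    (INR n2 * (INR n1 - 1) * g1 (beta1 vl) - INR n1 * (INR n2 - 1) * g2 (beta2 vl))
    / ((INR n1 - 1) * g1 (beta1 vl) - (INR n2 - 1) * g2 (beta2 vl))
  /\
  (forall gamma b1 b2, 0 <= gamma <= 1 ->
     is_quantile (beta1 vl) (beta1 vh) G1 gamma b1 ->
     is_quantile (beta2 vl) (beta2 vh) G2 gamma b2 ->
     Hfun D Dp gamma =
       (b2 - b1) / (1 - theta) *
       / (1 / ((INR n1 - 1) * g1 b1) - 1 / ((INR n2 - 1) * g2 b2)))
  /\
  (forall gamma, 0 < gamma <= 1 ->
     exists pr : Riemann_integrable (fun t => / Hfun D Dp t) gamma 1,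
       D gamma = exp (- RiemannInt pr))
  /\
  (forall gamma v b1 b2, 0 <= gamma <= 1 ->
     is_quantile vl vh F0 gamma v ->
     is_quantile (beta1 vl) (beta1 vh) G1 gamma b1 ->
     is_quantile (beta2 vl) (beta2 vh) G2 gamma b2 ->
     v = b1 + (1 - theta) * Hfun D Dp gamma / ((INR n1 - 1) * g1 b1) /\
     v = b2 + (1 - theta) * Hfun D Dp gamma / ((INR n2 - 1) * g2 b2)).
Proof.
  intros Hn1 Hn12 Hvv Htheta HF0 Hf0 [Hamb _] HGam0 HGams _ HFs Hfs HDF _ HD HD0 HD1 _
    Heq1 Heq2 Hbid1 Hbid2.
  assert (HF0_incr : strict_incr_on F0 vl vh) by (now destruct (Hamb F0 HGam0) as [? [_ ?]]).
  assert (HFs_incr : strict_incr_on Fstar vl vh)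
    by (now destruct (Hamb Fstar HGams) as [? [_ ?]]).
  assert (Hn2 : (2 <= n2)%nat) by lia.
  split; [|split; [|split]].
  - eapply (theta_identified vl vh theta F0 f0 Fstar fstar); eassumption.
  - intros gamma b1 b2. eapply (Hfun_of_bid_quantiles vl vh theta F0 f0 Fstar fstar); eassumption.
  - intros gamma Hgamma. eapply (D_exp_integral vl vh F0 f0 Fstar fstar); eassumption.
  - intros gamma v b1 b2 _ Hqv Hq1 Hq2.
    split; eapply (value_of_bid_quantile vl vh theta F0 f0 Fstar fstar); eassumption.
Qed.
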